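(* Let $\theta$ be a comtrace alphabet. For all $T_1,T_2\in\mathsf{LCT}(\theta)$, the composition $T_1\odot T_2$ is an lsos-comtrace over $\theta$, i.e. $T_1\odot T_2\in\mathsf{LCT}(\theta)$.
   Context: So-structures: $(X,\prec,\sqsubset)$ with (S1) $\neg(\alpha\sqsubset\alpha)$; (S2) $\alpha\prec\beta\Rightarrow\alpha\sqsubset\beta$; (S3) $\alpha\sqsubset\beta\sqsubset\gamma\wedge\alpha\neq\gamma\Rightarrow\alpha\sqsubset\gamma$; (S4) $(\alpha\sqsubset\beta\prec\gamma)\vee(\alpha\prec\beta\sqsubset\gamma)\Rightarrow\alpha\prec\gamma$. Quotient: $\alpha\equiv_\sqsubset\beta$ iff $\alpha=\beta$ or ($\alpha\sqsubset\beta\wedge\beta\sqsubset\alpha$); classes $[\alpha]$; $[\alpha]\hat\prec[\beta]$ iff $[\alpha]\neq[\beta]$ and $([\alpha]\times[\beta])\cap\prec\neq\emptyset$; $\hat\sqsubset$ likewise. $R^{\mathrm{cov}}:=\{(x,y):xRy\wedge\neg\exists z(xRz\wedge zRy)\}$. $\lozenge$-closure: $(X,R_1,R_2)^\lozenge:=(X,(R_1\cup R_2)^*\circ R_1\circ(R_1\cup R_2)^*,(R_1\cup R_2)^*\setminus\mathrm{id}_X)$. Labeled structures are taken up to label-preserving isomorphism (bijections preserving/reflecting both relations and preserving labels); $[\cdot]$ denotes the class. Comtrace alphabet: $\theta=(E,sim,ser)$, $E$ finite, $ser\subseteq sim\subseteq E\times E$, $sim$ irreflexive symmetric. Lsos-comtrace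 over $\theta$: the class of a finite labeled so-structure $(X,\prec,\sqsubset,\lambda)$, $\lambda:X\to E$, such that for all $\alpha\neq\beta$: (LC1) $[\alpha]((\hat\sqsubset)^{\mathrm{cov}}\cap\hat\prec)[\beta]\Rightarrow\lambda[[\alpha]]\times\lambda[[\beta]]\not\subseteq ser$; (LC2) $[\alpha]((\hat\sqsubset)^{\mathrm{cov}}\setminus\hat\prec)[\beta]\Rightarrow\lambda[[\beta]]\times\lambda[[\alpha]]\not\subseteq ser$; (LC3) for nonempty $A,B\subseteq[\alpha]$ with $A\cup B=[\alpha]$, $\lambda[A]\times\lambda[B]\not\subseteq ser$; (LC4) $(\lambda\alpha,\lambda\beta)\notin ser\Rightarrow\alpha\prec\beta\vee\beta\sqsubset\alpha$; (LC5) $(\lambda\alpha,\lambda\beta)\notin sim\Rightarrow\alpha\prec\beta\vee\beta\prec\alpha$. $\mathsf{LCT}(\theta)$ is the set of these. Composition: for $T_i=[X_i,\prec_i,\sqsubset_i,\lambda_i]$ ($i=1,2$), with $X_1,X_2$ made disjoint, $T_1\odot T_2:=[X,\prec,\sqsubset,\lambda]$ where $X=X_1\uplus X_2$, $\lambda=\lambda_1\uplus\lambda_2$, $(X,\prec,\sqsubset)=(X,\prec_{\langle1,2\rangle},\sqsubset_{\langle1,2\rangle})^\lozenge$ with $\prec_{\langle1,2\rangle}=\prec_1\cup\prec_2\cup\{(\alpha,\beta)\in X_1\times X_2:(\lambda\alpha,\lambda\beta)\notin ser\}$ and $\sqsubset_{\langle1,2\rangle}=\sqsubset_1\cup\sqsubset_2\cup\{(\alpha,\beta)\in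 X_1\times X_2:(\lambda\beta,\lambda\alpha)\notin ser\}$. *)

From mathcomp Require Import all_boot.
Set Implicit Arguments. Unset Strict Implicit. Unset Printing Implicit Defensive.

Definition comtrace_alphabet (E : finType) (sim ser : rel E) : Prop :=
  [/\ (forall a b, ser a b -> sim a b), irreflexive sim & symmetric sim].

Definition so_structure (X : finType) (prec sq : rel X) : Prop :=
  [/\ (forall a, ~~ sq a a),
      (forall a b, prec a b -> sq a b),
      (forall a b c, sq a b -> sq b c -> a != c -> sq a c) &
      (forall a b c, (sq a b && prec b c) || (prec a b && sq b c) -> prec a c)].

Section Quotient.
Variables (X : finType) (prec sq : rel X).

Definition sq_eqv (a b : X) : bool := (a == b) || (sq a b && sq b a).

Definition cls (a : X) : {set X} := [set b | sq_eqv a b].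

Definition hprec (a b : X) : bool :=
  (cls a != cls b) && [exists x in cls a, exists y in cls b, prec x y].
Definition hsq (a b : X) : bool :=
  (cls a != cls b) && [exists x in cls a, exists y in cls b, sq x y].

(** [a] (^⊏)^cov [b]: every class is of the form [c] *)
Definition hsq_cov (a b : X) : bool :=
  hsq a b && ~~ [exists c, hsq a c && hsq c b].
End Quotient.

Definition lsos_comtrace (E : finType) (sim ser : rel E)
    (X : finType) (prec sq : rel X) (lam : X -> E) : Prop :=
  so_structure prec sq /\
  forall a b : X, a != b ->
    [/\
        (hsq_cov sq a b && hprec prec sq a b ->
           exists2 x, x \in cls sq a & exists2 y, y \in cls sq b & ~~ ser (lam x) (lam y)),
        (hsq_cov sq a b && ~~ hprec prec sq a b ->
           exists2 x, x \in cls sq a & exists2 y, y \in cls sq b & ~~ ser (lam y) (lam x)),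
        (forall A B : {set X}, A != set0 -> B != set0 -> A \subset cls sq a ->
           B \subset cls sq a -> A :|: B = cls sq a ->
           exists2 x, x \in A & exists2 y, y \in B & ~~ ser (lam x) (lam y)),
        (~~ ser (lam a) (lam b) -> prec a b \/ sq b a) &
        (~~ sim (lam a) (lam b) -> prec a b \/ prec b a)].

Section Composition.
Variables (E : finType) (ser : rel E).
Variables (X1 X2 : finType) (prec1 sq1 : rel X1) (prec2 sq2 : rel X2)
          (lam1 : X1 -> E) (lam2 : X2 -> E).

Definition comp_lab (x : X1 + X2) : E :=
  match x with inl a => lam1 a | inr b => lam2 b end.

Definition prec12 : rel (X1 + X2) := fun x y =>
  match x, y with
  | inl a, inl b => prec1 a b
  | inr a, inr b => prec2 a b
  | inl a, inr b => ~~ ser (lam1 a) (lam2 b)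
  | inr _, inl _ => false
  end.

Definition sq12 : rel (X1 + X2) := fun x y =>
  match x, y with
  | inl a, inl b => sq1 a b
  | inr a, inr b => sq2 a b
  | inl a, inr b => ~~ ser (lam2 b) (lam1 a)
  | inr _, inl _ => false
  end.

Definition star12 : rel (X1 + X2) :=
  connect [rel x y | prec12 x y || sq12 x y].

Definition comp_prec : rel (X1 + X2) := fun x y =>
  [exists z, exists w, [&& star12 x z, prec12 z w & star12 w y]].
Definition comp_sq : rel (X1 + X2) := fun x y =>
  star12 x y && (x != y).
End Composition.

From mathcomp Require Import all_boot.
Set Implicit Arguments. Unset Strict Implicit. Unset Printing Implicit Defensive.

(* Every edge of ≺_<1,2> ∪ ⊏_<1,2> stays inside X1 or X2 or goes from X1 to X2,
   so a path crosses at most once, and inside X_i it can use only ≺_i ∪ ⊏_i,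
   i.e. ⊏_i steps.  Hence the ◇-closure restricts to (≺_i, ⊏_i) on each X_i:
   the composite is an so-structure whose ⊏-classes are those of T1 and T2,
   and LC1-LC5 for pairs inside one X_i transfer from T_i.  A class of X2
   never ⊏-precedes a class of X1; when [α] ⊆ X1 is covered by [β] ⊆ X2, every
   point of a path from [α] to [β] lies in [α] or [β] by the covering
   property, so the cover is realised by a single cross edge between the two
   classes, whose labels give LC1 and LC2. *)

Definition rclos (T : eqType) (r : rel T) : rel T := fun a b => (a == b) || r a b.

Lemma rclos_refl (T : eqType) (r : rel T) a : rclos r a a.
Proof. by rewrite /rclos eqxx. Qed.

Definition lsos_pair (E : finType) (sim ser : rel E)
    (X : finType) (prec sq : rel X) (lam : X -> E) (a b : X) : Prop :=
  [/\ hsq_cov sq a b && hprec prec sq a b ->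
        exists2 x, x \in cls sq a & exists2 y, y \in cls sq b & ~~ ser (lam x) (lam y),
      hsq_cov sq a b && ~~ hprec prec sq a b ->
        exists2 x, x \in cls sq a & exists2 y, y \in cls sq b & ~~ ser (lam y) (lam x),
      forall A B : {set X}, A != set0 -> B != set0 -> A \subset cls sq a ->
        B \subset cls sq a -> A :|: B = cls sq a ->
        exists2 x, x \in A & exists2 y, y \in B & ~~ ser (lam x) (lam y),
      ~~ ser (lam a) (lam b) -> prec a b \/ sq b a &
      ~~ sim (lam a) (lam b) -> prec a b \/ prec b a].

Section Classes.
Variables (X : finType) (prec sq : rel X).

Lemma exists_clsP (r : rel X) a b :
  reflect (exists2 u, u \in cls sq a & exists2 v, v \in cls sq b & r u v)
          [exists u in cls sq a, exists v in cls sq b, r u v].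
Proof.
apply: (iffP existsP) => [[u /andP [au /existsP [v /andP [bv uv]]]] | [u au [v bv uv]]].
  by exists u => //; exists v.
by exists u; rewrite au; apply/existsP; exists v; rewrite bv.
Qed.

Hypothesis so : so_structure prec sq.

Lemma sq_irr a : sq a a = false.
Proof. by case: so => S1 _ _ _; apply/negbTE. Qed.

Lemma sq_of_prec_or a b : prec a b || sq a b -> sq a b.
Proof. by case: so => _ S2 _ _ /orP [/S2|]. Qed.

Lemma rclos_sq_trans a c b : sq a c -> rclos sq c b -> rclos sq a b.
Proof.
case: so => _ _ S3 _ ac /orP [/eqP <- | cb]; first by rewrite /rclos ac orbT.
by rewrite /rclos; case: eqVneq => [//| nab]; exact: S3 ac cb nab.
Qed.

Lemma prec_rclos a c d b : rclos sq a c -> prec c d -> rclos sq d b -> prec a b.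
Proof.
case: so => _ _ _ S4 /orP [/eqP -> | ac] cd.
  by case/orP => [/eqP <- // | db]; apply: (S4 c d b); rewrite cd db orbT.
have ad : prec a d by apply: (S4 a c d); rewrite ac cd.
by case/orP => [/eqP <- // | db]; apply: (S4 a d b); rewrite ad db orbT.
Qed.

Lemma prec_rclos_asym a b : prec a b -> ~~ rclos sq b a.
Proof.
move=> ab; apply/negP => ba; case: so => _ S2 _ _.
by have /S2 := prec_rclos (rclos_refl sq a) ab ba; rewrite sq_irr.
Qed.

Lemma sq_eqv_sym a b : sq_eqv sq a b = sq_eqv sq b a.
Proof. by rewrite /sq_eqv eq_sym andbC. Qed.

Lemma sq_eqv_trans a b c : sq_eqv sq a b -> sq_eqv sq b c -> sq_eqv sq a c.
Proof.
case: so => _ _ S3 _; rewrite /sq_eqv.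
case: eqP => [-> // | nab] /= /andP [ab ba].
case: eqP => [<- | nbc] /=; first by rewrite ab ba orbT.
case/andP => bc cb; case: eqVneq => [// | nac] /=.
by rewrite (S3 _ _ _ ab bc nac) (S3 _ _ _ cb ba) // eq_sym.
Qed.

Lemma mem_cls a : a \in cls sq a.
Proof. by rewrite inE /sq_eqv eqxx. Qed.

Lemma mem_clsC a b : (a \in cls sq b) = (b \in cls sq a).
Proof. by rewrite !inE sq_eqv_sym. Qed.

Lemma eq_clsE a b : (cls sq a == cls sq b) = (b \in cls sq a).
Proof.
apply/idP/idP => [/eqP -> | ab]; first exact: mem_cls.
apply/eqP/setP => z; rewrite !inE; apply/idP/idP => hz.
  by apply: sq_eqv_trans hz; rewrite sq_eqv_sym -inE.
by apply: sq_eqv_trans hz; rewrite -inE.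
Qed.

Lemma cls_prec_free c u v : u \in cls sq c -> v \in cls sq c -> ~~ prec u v.
Proof.
rewrite !inE => cu cv.
have eqv : sq_eqv sq v u by apply: sq_eqv_trans cu; rewrite sq_eqv_sym.
have vu : rclos sq v u by case/orP: eqv => [/eqP -> | /andP [vu _]]; rewrite /rclos ?eqxx ?vu ?orbT.
by apply/negP => /prec_rclos_asym; rewrite vu.
Qed.

Lemma hsq_cov_between a b u v m : hsq_cov sq a b ->
  u \in cls sq a -> v \in cls sq b -> rclos sq u m -> rclos sq m v ->
  (m \in cls sq a) || (m \in cls sq b).
Proof.
case/andP => _ /existsPn nomid au bv um mv.
apply/negPn/negP; rewrite negb_or => /andP [am bm].
case/orP: um => [/eqP um | um]; first by rewrite -um au in am.
case/orP: mv => [/eqP mv | mv]; first by rewrite mv bv in bm.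
have := nomid m; rewrite /hsq !eq_clsE am (mem_clsC b) bm /=.
have -> : [exists x in cls sq a, exists y in cls sq m, sq x y].
  by apply/exists_clsP; exists u => //; exists m => //; exact: mem_cls.
suff -> : [exists x in cls sq m, exists y in cls sq b, sq x y] by [].
by apply/exists_clsP; exists m; [exact: mem_cls | exists v].
Qed.
End Classes.

Lemma lsos_LC3 (E : finType) (sim ser : rel E) (X : finType) (prec sq : rel X)
    (lam : X -> E) : comtrace_alphabet sim ser -> lsos_comtrace sim ser prec sq lam ->
  forall (a : X) (A B : {set X}), A != set0 -> B != set0 -> A \subset cls sq a ->
    B \subset cls sq a -> A :|: B = cls sq a ->
    exists2 x, x \in A & exists2 y, y \in B & ~~ ser (lam x) (lam y).
Proof.
move=> [ser_sim sim_irr _] [_ Hpair] a A B.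
case: (pickP (predC1 a)) => [b /= ba | only_a].
  by rewrite eq_sym in ba; have [_ _ LC3 _ _] := Hpair a b ba; exact: LC3.
have all_a x : x = a by apply/eqP/negbFE/only_a.
case/set0Pn => x Ax /set0Pn [y By] _ _ _; exists x => //; exists y => //.
by rewrite (all_a x) (all_a y); apply/negP => /ser_sim; rewrite sim_irr.
Qed.

Section Embedding.
Variables (E : finType) (sim ser : rel E).
Hypothesis alph : comtrace_alphabet sim ser.
Variables (Y X : finType) (pY sY : rel Y) (pX sX : rel X) (f : Y -> X)
  (lamY : Y -> E) (lamX : X -> E).
Hypotheses (soY : so_structure pY sY) (soX : so_structure pX sX).
Hypotheses (f_inj : injective f) (sq_f : forall a b, sX (f a) (f b) = sY a b)
  (prec_f : forall a b, pX (f a) (f b) = pY a b)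
  (cls_f : forall a x, x \in cls sX (f a) -> exists y, x = f y)
  (lam_f : forall y, lamX (f y) = lamY y).

Lemma mem_cls_f a b : (f b \in cls sX (f a)) = (b \in cls sY a).
Proof. by rewrite !inE /sq_eqv (inj_eq f_inj) !sq_f. Qed.

Lemma eq_cls_f a b : (cls sX (f a) == cls sX (f b)) = (cls sY a == cls sY b).
Proof. by rewrite (eq_clsE soX) (eq_clsE soY) mem_cls_f. Qed.

Lemma exists_cls_f (rX : rel X) (rY : rel Y) :
    (forall a b, rX (f a) (f b) = rY a b) -> forall a b,
  [exists u in cls sX (f a), exists v in cls sX (f b), rX u v] =
  [exists u in cls sY a, exists v in cls sY b, rY u v].
Proof.
move=> r_f a b; apply/exists_clsP/exists_clsP => [[u au [v bv uv]] | [u au [v bv uv]]].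
  have [u' eu] := cls_f au; have [v' ev] := cls_f bv; subst u v.
  by exists u'; rewrite -?mem_cls_f //; exists v'; rewrite -?mem_cls_f -?r_f.
by exists (f u); rewrite ?mem_cls_f //; exists (f v); rewrite ?mem_cls_f ?r_f.
Qed.

Lemma hsq_f a b : hsq sX (f a) (f b) = hsq sY a b.
Proof. by rewrite /hsq eq_cls_f (exists_cls_f sq_f). Qed.

Lemma hprec_f a b : hprec pX sX (f a) (f b) = hprec pY sY a b.
Proof. by rewrite /hprec eq_cls_f (exists_cls_f prec_f). Qed.

Lemma hsq_cov_f a b : hsq_cov sX (f a) (f b) -> hsq_cov sY a b.
Proof.
case/andP => ab /existsPn nomid; rewrite /hsq_cov -hsq_f ab /=.
by apply/existsPn => c; have := nomid (f c); rewrite !hsq_f.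
Qed.

Hypothesis lsosY : lsos_comtrace sim ser pY sY lamY.

Lemma LC3_f a (A B : {set X}) : A != set0 -> B != set0 -> A \subset cls sX (f a) ->
  B \subset cls sX (f a) -> A :|: B = cls sX (f a) ->
  exists2 x, x \in A & exists2 y, y \in B & ~~ ser (lamX x) (lamX y).
Proof.
have preim_neq0 (C : {set X}) : C != set0 -> C \subset cls sX (f a) -> f @^-1: C != set0.
  move=> /set0Pn [x Cx] /subsetP sC; have [y ey] := cls_f (sC x Cx).
  by apply/set0Pn; exists y; rewrite inE -ey.
have preim_sub (C : {set X}) : C \subset cls sX (f a) -> f @^-1: C \subset cls sY a.
  by move/subsetP => sC; apply/subsetP => y; rewrite inE => /sC; rewrite mem_cls_f.
move=> A0 B0 sA sB AB.
have AB' : f @^-1: A :|: f @^-1: B = cls sY a.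
  by apply/setP => y; rewrite -mem_cls_f -AB !inE.
have [x Ax [y By xy]] := lsos_LC3 alph lsosY (preim_neq0 _ A0 sA) (preim_neq0 _ B0 sB)
  (preim_sub _ sA) (preim_sub _ sB) AB'.
exists (f x); first by rewrite inE in Ax.
by exists (f y); [rewrite inE in By | rewrite !lam_f].
Qed.

Lemma lsos_pair_f a b : a != b -> lsos_pair sim ser pX sX lamX (f a) (f b).
Proof.
move=> ab; have [_ Hpair] := lsosY; have [LC1 LC2 _ LC4 LC5] := Hpair a b ab.
have transfer (r : rel E) :
    (exists2 x, x \in cls sY a & exists2 y, y \in cls sY b & r (lamY x) (lamY y)) ->
    exists2 x, x \in cls sX (f a) & exists2 y, y \in cls sX (f b) & r (lamX x) (lamX y).
  case=> x ax [y bx xy]; exists (f x); rewrite ?mem_cls_f //.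
  by exists (f y); rewrite ?mem_cls_f ?lam_f.
split; rewrite ?lam_f ?prec_f ?sq_f //; last exact: LC3_f.
- case/andP => /hsq_cov_f cov; rewrite hprec_f => p.
  by apply: (transfer (fun e1 e2 => ~~ ser e1 e2)); apply: LC1; rewrite cov.
- case/andP => /hsq_cov_f cov; rewrite hprec_f => np.
  by apply: (transfer (fun e1 e2 => ~~ ser e2 e1)); apply: LC2; rewrite cov.
Qed.
End Embedding.

Section Composition.
Variables (E : finType) (sim ser : rel E).
Variables (X1 : finType) (prec1 sq1 : rel X1) (lam1 : X1 -> E)
    (X2 : finType) (prec2 sq2 : rel X2) (lam2 : X2 -> E).
Hypotheses (so1 : so_structure prec1 sq1) (so2 : so_structure prec2 sq2).

Local Notation P12 := (prec12 ser prec1 prec2 lam1 lam2).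
Local Notation S12 := (sq12 ser sq1 sq2 lam1 lam2).
Local Notation ST := (star12 ser prec1 sq1 prec2 sq2 lam1 lam2).
Local Notation CP := (comp_prec ser prec1 sq1 prec2 sq2 lam1 lam2).
Local Notation CS := (comp_sq ser prec1 sq1 prec2 sq2 lam1 lam2).
Local Notation C := (cls CS).
Local Notation lam := (comp_lab lam1 lam2).

Definition reach12 (x y : X1 + X2) : bool :=
  match x, y with
  | inl a, inl b => rclos sq1 a b
  | inr a, inr b => rclos sq2 a b
  | inl a, inr b => [exists a', exists b', [&& rclos sq1 a a',
       ~~ ser (lam1 a') (lam2 b') || ~~ ser (lam2 b') (lam1 a') & rclos sq2 b' b]]
  | inr _, inl _ => false
  end.

Lemma reach12_step x z y : P12 x z || S12 x z -> reach12 z y -> reach12 x y.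
Proof.
case: x => a; case: z => c; case: y => b //=.
- by move/(sq_of_prec_or so1); exact: (rclos_sq_trans so1).
- move/(sq_of_prec_or so1) => ac /existsP [a' /existsP [b' /and3P [ca' e b'b]]].
  by apply/existsP; exists a'; apply/existsP; exists b'; rewrite (rclos_sq_trans so1 ac ca') e.
- by move=> e cb; apply/existsP; exists a; apply/existsP; exists c; rewrite rclos_refl e.
- by move/(sq_of_prec_or so2); exact: (rclos_sq_trans so2).
Qed.

Lemma star12_edge x y : P12 x y || S12 x y -> ST x y.
Proof. by move=> xy; apply: connect1. Qed.

Lemma prec12_star12 x y : P12 x y -> ST x y.
Proof. by move=> xy; apply: star12_edge; rewrite xy. Qed.

Lemma star12_refl x : ST x x.
Proof. exact: connect0. Qed.

Lemma star12_trans : transitive ST.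
Proof. exact: connect_trans. Qed.

Lemma star12E x y : ST x y = reach12 x y.
Proof.
apply/idP/idP.
  case/connectP => p; elim: p x => [|z p IH] x /=.
    by move=> _ ->; case: x => a /=; exact: rclos_refl.
  by case/andP => xz pz ey; apply: reach12_step xz (IH z pz ey).
have lift1 a b : rclos sq1 a b -> ST (inl a) (inl b).
  by case/orP => [/eqP -> | ab]; [exact: star12_refl | apply: star12_edge; rewrite /= ab orbT].
have lift2 a b : rclos sq2 a b -> ST (inr a) (inr b).
  by case/orP => [/eqP -> | ab]; [exact: star12_refl | apply: star12_edge; rewrite /= ab orbT].
case: x => a; case: y => b //=; [exact: lift1 | | exact: lift2].
case/existsP => a' /existsP [b' /and3P [aa' e b'b]].
have a'b' : ST (inl a') (inr b') by apply: star12_edge.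
exact: star12_trans (lift1 _ _ aa') (star12_trans a'b' (lift2 _ _ b'b)).
Qed.

Lemma comp_sq_ll a b : CS (inl a) (inl b) = sq1 a b.
Proof.
rewrite /comp_sq star12E /= /rclos (inj_eq inl_inj).
by case: eqVneq => [-> | _]; rewrite ?(sq_irr so1) ?andbT.
Qed.

Lemma comp_sq_rr a b : CS (inr a) (inr b) = sq2 a b.
Proof.
rewrite /comp_sq star12E /= /rclos (inj_eq inr_inj).
by case: eqVneq => [-> | _]; rewrite ?(sq_irr so2) ?andbT.
Qed.

Lemma comp_sq_rl a b : CS (inr a) (inl b) = false.
Proof. by rewrite /comp_sq star12E. Qed.

Lemma rclos_comp_sq x y : rclos CS x y = ST x y.
Proof. by rewrite /rclos /comp_sq; case: eqVneq => [-> | _]; rewrite ?star12_refl ?andbT. Qed.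

Lemma comp_prec_edge x y : P12 x y -> CP x y.
Proof.
by move=> xy; apply/existsP; exists x; apply/existsP; exists y; rewrite xy !star12_refl.
Qed.

Lemma comp_prec_ll a b : CP (inl a) (inl b) = prec1 a b.
Proof.
apply/idP/idP => [|ab]; last exact: comp_prec_edge.
case/existsP => z /existsP [w /and3P []]; rewrite !star12E.
by case: z => z; case: w => w //=; exact: prec_rclos.
Qed.

Lemma comp_prec_rr a b : CP (inr a) (inr b) = prec2 a b.
Proof.
apply/idP/idP => [|ab]; last exact: comp_prec_edge.
case/existsP => z /existsP [w /and3P []]; rewrite !star12E.
by case: z => z; case: w => w //=; exact: prec_rclos.
Qed.

Lemma prec12_star12_asym z w : P12 z w -> ~~ ST w z.
Proof.
rewrite star12E; case: z => z; case: w => w //=; [exact: prec_rclos_asym | exact: prec_rclos_asym].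
Qed.

Lemma comp_so_structure : so_structure CP CS.
Proof.
split.
- by move=> a; rewrite /comp_sq eqxx andbF.
- move=> a b /existsP [z /existsP [w /and3P [az zw wb]]].
  rewrite /comp_sq (star12_trans az (star12_trans (prec12_star12 zw) wb)) /=.
  by apply: contraNneq (prec12_star12_asym zw) => ab; rewrite -ab in wb; exact: star12_trans wb az.
- by move=> a b c /andP [ab _] /andP [bc _] ac; rewrite /comp_sq ac (star12_trans ab bc).
- move=> a b c /orP [] /andP [].
  + move=> /andP [ab _] /existsP [z /existsP [w /and3P [bz zw wc]]].
    by apply/existsP; exists z; apply/existsP; exists w; rewrite (star12_trans ab bz) zw.
  + move=> /existsP [z /existsP [w /and3P [az zw wb]]] /andP [bc _].
    by apply/existsP; exists z; apply/existsP; exists w; rewrite az zw (star12_trans wb bc).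
Qed.

Lemma inr_notin_cls_inl a b : (inr b \in C (inl a)) = false.
Proof. by apply/negbTE; rewrite inE /sq_eqv /= comp_sq_rl andbF. Qed.

Lemma inl_notin_cls_inr a b : (inl b \in C (inr a)) = false.
Proof. by apply/negbTE; rewrite inE /sq_eqv /= comp_sq_rl. Qed.

Lemma cls_inl a x : x \in C (inl a) -> exists y, x = inl y.
Proof. by case: x => y; [exists y | rewrite inr_notin_cls_inl]. Qed.

Lemma cls_inr a x : x \in C (inr a) -> exists y, x = inr y.
Proof. by case: x => y; [rewrite inl_notin_cls_inr | exists y]. Qed.

Lemma comp_cover_between al be u v m : hsq_cov CS al be ->
  u \in C al -> v \in C be -> ST u m -> ST m v -> (m \in C al) || (m \in C be).
Proof.
move=> cov au bv um mv.
by apply: (hsq_cov_between comp_so_structure cov au bv); rewrite rclos_comp_sq.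
Qed.

Lemma cover_cross_edge a b u v x y : hsq_cov CS (inl a) (inr b) ->
  u \in C (inl a) -> v \in C (inr b) -> ST u (inl x) ->
  P12 (inl x) (inr y) || S12 (inl x) (inr y) -> ST (inr y) v ->
  inl x \in C (inl a) /\ inr y \in C (inr b).
Proof.
move=> cov au bv ux /star12_edge xy yv; split.
  have := comp_cover_between cov au bv ux (star12_trans xy yv).
  by rewrite inl_notin_cls_inr orbF.
have := comp_cover_between cov au bv (star12_trans ux xy) yv.
by rewrite inr_notin_cls_inl orFb.
Qed.

Lemma cover_lr_edge a b : hsq_cov CS (inl a) (inr b) -> exists x, exists y,
  [/\ inl x \in C (inl a), inr y \in C (inr b) & P12 (inl x) (inr y) || S12 (inl x) (inr y)].
Proof.
move=> cov; have /andP [/andP [_ /exists_clsP [u au [v bv uv]]] _] := cov.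
have [x ex] := cls_inl au; have [y ey] := cls_inr bv; subst u v.
case/andP: uv; rewrite star12E => /existsP [x' /existsP [y' /and3P [xx' e y'y]]] _.
have [ax' by'] : inl x' \in C (inl a) /\ inr y' \in C (inr b).
  by apply: (cover_cross_edge cov au bv _ e); rewrite star12E.
by exists x', y'.
Qed.

Lemma comp_LC1_lr a b : hsq_cov CS (inl a) (inr b) -> hprec CP CS (inl a) (inr b) ->
  exists2 x, x \in C (inl a) & exists2 y, y \in C (inr b) & ~~ ser (lam x) (lam y).
Proof.
move=> cov /andP [_ /exists_clsP [u au [v bv /existsP [z /existsP [w /and3P [uz zw wv]]]]]].
have [x ex] := cls_inl au; have [y ey] := cls_inr bv; subst u v.
move: uz zw wv; case: z => z; case: w => w uz zw wv.
- have xw : CP (inl x) (inl w).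
    by apply/existsP; exists (inl z); apply/existsP; exists (inl w); rewrite uz zw star12_refl.
  have := comp_cover_between cov au bv (star12_trans uz (prec12_star12 zw)) wv.
  by rewrite inl_notin_cls_inr orbF => aw; case/negP: (cls_prec_free comp_so_structure au aw).
- have [az bw] := cover_cross_edge cov au bv uz (introT orP (or_introl zw)) wv.
  by exists (inl z) => //; exists (inr w).
- by [].
- have zy : CP (inr z) (inr y).
    by apply/existsP; exists (inr z); apply/existsP; exists (inr w); rewrite star12_refl zw wv.
  have := comp_cover_between cov au bv uz (star12_trans (prec12_star12 zw) wv).
  by rewrite inr_notin_cls_inl orFb => bz; case/negP: (cls_prec_free comp_so_structure bz bv).
Qed.

Lemma comp_LC2_lr a b : hsq_cov CS (inl a) (inr b) -> ~~ hprec CP CS (inl a) (inr b) ->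
  exists2 x, x \in C (inl a) & exists2 y, y \in C (inr b) & ~~ ser (lam y) (lam x).
Proof.
move=> cov; have [x [y [ax bx /orP [pxy | sxy]]]] := cover_lr_edge cov.
  case/negP; rewrite /hprec; case/andP: cov => /andP [-> _] _ /=.
  by apply/exists_clsP; exists (inl x) => //; exists (inr y) => //; exact: comp_prec_edge.
by move=> _; exists (inl x) => //; exists (inr y).
Qed.

Lemma comp_cover_rl a b : hsq_cov CS (inr a) (inl b) = false.
Proof.
apply/negbTE/negP => /andP [/andP [_ /exists_clsP [u au [v bv uv]]] _].
have [x ex] := cls_inr au; have [y ey] := cls_inl bv; subst u v.
by rewrite comp_sq_rl in uv.
Qed.

Hypothesis alph : comtrace_alphabet sim ser.
Hypotheses (lsos1 : lsos_comtrace sim ser prec1 sq1 lam1)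
  (lsos2 : lsos_comtrace sim ser prec2 sq2 lam2).

Lemma comp_pair_ll a b : a != b -> lsos_pair sim ser CP CS lam (inl a) (inl b).
Proof.
exact: (lsos_pair_f alph so1 comp_so_structure inl_inj comp_sq_ll comp_prec_ll cls_inl
  (fun _ => erefl) lsos1).
Qed.

Lemma comp_pair_rr a b : a != b -> lsos_pair sim ser CP CS lam (inr a) (inr b).
Proof.
exact: (lsos_pair_f alph so2 comp_so_structure inr_inj comp_sq_rr comp_prec_rr cls_inr
  (fun _ => erefl) lsos2).
Qed.

Lemma comp_pair_lr a b : lsos_pair sim ser CP CS lam (inl a) (inr b).
Proof.
have [ser_sim _ _] := alph.
split.
- by case/andP; exact: comp_LC1_lr.
- by case/andP; exact: comp_LC2_lr.
- exact: (LC3_f alph inl_inj comp_sq_ll cls_inl (fun _ => erefl) lsos1).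
- by move=> e; left; apply: comp_prec_edge.
- by move=> e; left; apply: comp_prec_edge; apply: contra e; exact: ser_sim.
Qed.

Lemma comp_pair_rl a b : lsos_pair sim ser CP CS lam (inr a) (inl b).
Proof.
have [ser_sim _ sim_sym] := alph.
split; rewrite ?comp_cover_rl //.
- exact: (LC3_f alph inr_inj comp_sq_rr cls_inr (fun _ => erefl) lsos2).
- by move=> e; right; apply/andP; split; [apply: star12_edge; rewrite /= e orbT |].
- move=> e; right; apply: comp_prec_edge; apply: contra e => /ser_sim.
  by rewrite sim_sym.
Qed.
End Composition.

Theorem mainTheorem13 (E : finType) (sim ser : rel E)
    (X1 : finType) (prec1 sq1 : rel X1) (lam1 : X1 -> E)
    (X2 : finType) (prec2 sq2 : rel X2) (lam2 : X2 -> E) :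
  comtrace_alphabet sim ser ->
  lsos_comtrace sim ser prec1 sq1 lam1 ->
  lsos_comtrace sim ser prec2 sq2 lam2 ->
  lsos_comtrace sim ser
    (comp_prec ser prec1 sq1 prec2 sq2 lam1 lam2)
    (comp_sq ser prec1 sq1 prec2 sq2 lam1 lam2)
    (comp_lab lam1 lam2).
Proof.
move=> alph lsos1 lsos2; have [so1 _] := lsos1; have [so2 _] := lsos2.
split; first exact: comp_so_structure.
case=> a [] b ab.
- by apply: comp_pair_ll => //; rewrite -(inj_eq inl_inj).
- exact: comp_pair_lr.
- exact: comp_pair_rl.
- by apply: comp_pair_rr => //; rewrite -(inj_eq inr_inj).
Qed.
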